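(* Let $n,k,r,\delta$ be positive integers with $(r+\delta-1)\mid n$, let $d = n-k+1-\left(\lceil k/r\rceil-1\right)(\delta-1)$, and assume $\delta\le d$. Let $q$ be a prime power with $q>kn^k$. Then there exists an $[n,k,d]$ linear code over $\mathbb{F}_q$ with all-symbol locality $(r,\delta)$, i.e. an $(r,\delta)_a$ code whose minimum distance equals $n-k+1-\left(\lceil k/r\rceil-1\right)(\delta-1)$.
   Context: Coordinate $i$ of a linear code $\mathcal{C}$ of length $n$ has locality $(r,\delta)$ if there is $S_i\subseteq[n]$ with $i\in S_i$, $|S_i|\le r+\delta-1$, such that the punctured code $\mathcal{C}|_{S_i}$ (delete coordinates outside $S_i$) has minimum distance at least $\delta$. A code has all-symbol locality $(r,\delta)$ (is an $(r,\delta)_a$ code) if every one of its $n$ coordinates has locality $(r,\delta)$. *)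

From HB Require Import structures.
From mathcomp Require Import all_boot all_order all_algebra.
Set Implicit Arguments. Unset Strict Implicit. Unset Printing Implicit Defensive.
Import GRing.Theory.
Local Open Scope ring_scope.

(* A linear [n,k] code over F is represented by a generator matrix
   G : 'M[F]_(k, n) of full row rank k; its codewords are the row vectors
   in the row space of G. *)
Section Codes.
Variables (F : fieldType) (n m : nat).

Definition codeword (G : 'M[F]_(m, n)) (c : 'rV[F]_n) : Prop := (c <= G)%MS.

Definition wt_on (S : {set 'I_n}) (c : 'rV[F]_n) : nat :=
  #|[set j in S | c 0 j != 0]|.

Definition wt (c : 'rV[F]_n) : nat := #|[set j | c 0 j != 0]|.

Definition min_dist_eq (G : 'M[F]_(m, n)) (d : nat) : Prop :=
  (exists c, codeword G c /\ c != 0 /\ wt c = d) /\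
  (forall c, codeword G c -> c != 0 -> (d <= wt c)%N).

(* The punctured code C|_S has minimum distance at least delta: every
   nonzero codeword of C|_S (= restriction to S of a codeword of C that is
   not identically zero on S) has weight at least delta. *)
Definition punct_min_dist_ge (G : 'M[F]_(m, n)) (S : {set 'I_n}) (delta : nat)
  : Prop :=
  forall c, codeword G c -> (exists2 j, j \in S & c 0 j != 0) ->
    (delta <= wt_on S c)%N.

Definition has_locality (G : 'M[F]_(m, n)) (r delta : nat) (i : 'I_n) : Prop :=
  exists S : {set 'I_n},
    [/\ i \in S, (#|S| <= r + delta - 1)%N & punct_min_dist_ge G S delta].

Definition all_symbol_locality (G : 'M[F]_(m, n)) (r delta : nat) : Prop :=
  forall i : 'I_n, has_locality G r delta i.

End Codes.

Definition ceil_div (k r : nat) : nat := ((k + r.-1) %/ r)%N.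

(* Split the n coordinates into t = n / m blocks of m = r + delta - 1
   consecutive positions and let B be the block-diagonal matrix whose block b
   evaluates the monomials 1, X, ..., X^(r-1) at m distinct field elements.
   On each block a codeword of G = A B is the value vector of a polynomial of
   degree < r, so a restriction that is not identically zero has weight at
   least m - r + 1 = delta: this is the locality.  A k-set of coordinates
   meeting every block in at most r points carries k independent columns of B;
   as there are at most n^k < q such sets, A can be built row by row so that
   A B keeps all of them independent.  Any k + s (delta - 1) coordinates,
   s = ceil(k/r) - 1, contain such a set, which bounds the minimum distance
   from below; a nonzero codeword vanishing on the first s blocks and on
   k - 1 - s r further coordinates attains the bound. *)

From HB Require Import structures.
From mathcomp Require Import all_boot all_order all_algebra all_field.
From mathcomp Require Import mxabelem zify.
Set Implicit Arguments. Unset Strict Implicit. Unset Printing Implicit Defensive.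
Import GRing.Theory.

Lemma card_bigcup_leq (I T : finType) (P : pred I) (A : I -> {set T}) :
  #|\bigcup_(i | P i) A i| <= \sum_(i | P i) #|A i|.
Proof.
apply: (big_ind2 (fun (B : {set T}) s => #|B| <= s)) => [|B1 s1 B2 s2 le1 le2|//].
  by rewrite cards0.
exact: leq_trans (leq_card_setU B1 B2) (leq_add le1 le2).
Qed.

Lemma card_ord_lt n N : (N <= n)%N -> #|[set j : 'I_n | (j < N)%N]| = N.
Proof.
move=> le_Nn; have widen_inj : injective (widen_ord le_Nn).
  by move=> u v /(congr1 val) /= /val_inj.
rewrite -[RHS]card_ord -(card_imset _ widen_inj).
apply: eq_card => j; rewrite inE; apply/idP/imsetP => [lt_jN|[u _ ->] /=].
  by exists (Ordinal lt_jN) => //; apply: val_inj.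
exact: ltn_ord.
Qed.

Lemma exists_inj_ord (T : finType) n : n <= #|T| -> exists f : 'I_n -> T, injective f.
Proof.
move=> le_nT; exists (fun j => enum_val (widen_ord le_nT j)).
by move=> i j /enum_val_inj /(congr1 val) /= /val_inj.
Qed.

Lemma ceil_div_bounds k r : 0 < k -> 0 < r ->
  (ceil_div k r - 1) * r < k <= (ceil_div k r - 1).+1 * r.
Proof.
move=> k_gt0 r_gt0; rewrite /ceil_div.
have lo := leq_divM (k + r.-1) r; have hi := ltn_ceil (k + r.-1) r_gt0.
have c_gt0 : 0 < (k + r.-1) %/ r by rewrite divn_gt0 //; lia.
move: lo hi c_gt0; case: (_ %/ r) => // c lo hi _.
by rewrite subn1 /=; rewrite !mulSn in lo hi *; lia.
Qed.

Section Matrices.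
Variable F : fieldType.
Local Open Scope ring_scope.

Lemma mxrank_col_mx_notsub m n (u : 'rV[F]_n) (W : 'M[F]_(m, n)) :
  ~~ (u <= W)%MS -> \rank (col_mx u W) = (\rank W).+1.
Proof.
move=> uW; rewrite -addsmxE; apply/eqP; rewrite eqn_leq.
have : (W < u + W)%MS.
  by rewrite ltmxE addsmxSr addsmx_sub submx_refl andbT.
rewrite ltmxErank => /andP[_ ->]; rewrite andbT.
apply: leq_trans (mxrank_adds_leqif u W).1 _.
by rewrite rank_rV; case: (u != 0).
Qed.

Lemma wt_leq_vanish n N (c : 'rV[F]_n) : (N <= n)%N ->
  (forall j : 'I_n, (j < N)%N -> c 0 j = 0) -> (wt c <= n - N)%N.
Proof.
move=> le_Nn c0; have := cardsC [set j : 'I_n | (j < N)%N].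
rewrite card_ord_lt // card_ord => cardsCN.
apply: (@leq_trans #|~: [set j : 'I_n | (j < N)%N]|); last by lia.
apply/subset_leq_card/subsetP => j; rewrite !inE.
by apply: contra => lt_jN; apply/eqP/c0.
Qed.

Lemma row_free_colsub m n k (M : 'M[F]_(m, n)) (f : 'I_k -> 'I_n) :
  row_free (colsub f M) -> row_free M.
Proof.
move=> free_fM; apply/inj_row_free => x xM0; apply: (row_free_inj free_fM).
by rewrite mulmx_colsub xM0 mul0mx; apply/matrixP => i j; rewrite !mxE.
Qed.

End Matrices.

Section GenericRows.
Variable F : finFieldType.
Local Open Scope ring_scope.

Lemma card_rowg_kermx_leq D p (X : 'M[F]_(D, p)) :
  X != 0 -> (#|F| * #|rowg (kermx X)| <= #|F| ^ D)%N.
Proof.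
rewrite -mxrank_eq0 card_rowg mxrank_ker -expnS => X0.
have F_gt0 : (0 < #|F|)%N by apply/card_gt0P; exists 0.
by rewrite leq_pexp2l //; have := rank_leq_row X; lia.
Qed.

(* Rows are added one at a time: for each T the rows that would not raise the
   rank of [A *m M T] form a proper subspace, and fewer than #|F| proper
   subspaces cannot cover the whole space. *)
Lemma exists_mulmx_rank (X : finType) (fam : {set X}) D k
    (M : X -> 'M[F]_(D, k)) :
  (#|fam| < #|F|)%N -> (forall T, T \in fam -> k <= \rank (M T))%N ->
  forall i, (i <= k)%N ->
  exists A : 'M[F]_(i, D), forall T, T \in fam -> \rank (A *m M T) = i.
Proof.
move=> fam_lt rankM; elim=> [|i IHi] ltik.
  by exists 0 => T _; apply/eqP; rewrite -leqn0 rank_leq_row.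
have [A rankA] := IHi (ltnW ltik).
pose bad T := rowg (kermx (M T *m cokermx (A *m M T))).
have bad_small T : T \in fam -> (#|F| * #|bad T| <= #|F| ^ D)%N.
  move=> famT; apply: card_rowg_kermx_leq; apply: contraTneq ltik => MA0.
  have /mxrankS : (M T <= A *m M T)%MS by rewrite submxE MA0.
  by rewrite rankA // -ltnNge => /(leq_trans (rankM T famT)).
have F_gt0 : (0 < #|F|)%N by apply/card_gt0P; exists 0.
have lt_bad : (#|\bigcup_(T in fam) bad T| < #|[set: 'rV[F]_D]|)%N.
  rewrite cardsT card_mx mul1n -(ltn_pmul2l F_gt0).
  apply: leq_ltn_trans (leq_mul (leqnn _) (card_bigcup_leq _ _)) _.
  rewrite big_distrr /=; apply: (@leq_ltn_trans (\sum_(T in fam) #|F| ^ D)%N).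
    exact: leq_sum.
  by rewrite sum_nat_const ltn_pmul2r // expn_gt0 F_gt0.
have /subsetPn[a _ good_a] : ~~ ([set: 'rV[F]_D] \subset \bigcup_(T in fam) bad T).
  by apply: contraTN lt_bad => /subset_leq_card; rewrite leqNgt.
exists (col_mx a A) => T famT; rewrite (mul_col_mx a A) mxrank_col_mx_notsub.
  by rewrite (rankA T famT).
apply: contra good_a => aMA; apply/bigcupP; exists T => //.
by rewrite mem_rowg sub_kermx mulmxA -submxE.
Qed.

Lemma exists_mulmx_colsub_rank D n k (B : 'M[F]_(D, n)) : (n ^ k < #|F|)%N ->
  exists A : 'M[F]_(k, D), forall f : 'I_k -> 'I_n,
    \rank (colsub f B) = k -> \rank (colsub f (A *m B)) = k.
Proof.
move=> lt_nkF; pose fam := [set f : {ffun 'I_k -> 'I_n} | \rank (colsub f B) == k].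
have fam_lt : (#|fam| < #|F|)%N.
  apply: leq_ltn_trans (subset_leq_card (subsetT _)) _.
  by rewrite cardsT card_ffun !card_ord.
have rank_fam f : f \in fam -> (k <= \rank (colsub f B))%N.
  by rewrite inE => /eqP ->.
have [A rankA] := exists_mulmx_rank fam_lt rank_fam (leqnn k).
exists A => f rank_f.
have colsub_ffun p (M : 'M[F]_(p, n)) : colsub f M = colsub [ffun i => f i] M.
  by apply/matrixP => i j; rewrite !mxE ffunE.
by rewrite colsub_ffun -mulmx_colsub rankA // inE -colsub_ffun rank_f.
Qed.

End GenericRows.

Section Blocks.
Variables (n m t : nat).
Hypotheses (m_gt0 : 0 < m) (nE : n = t * m).

Definition block_card (X : {set 'I_n}) (b : nat) : nat :=
  #|[set j in X | j %/ m == b]|.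

Lemma block_lt (j : 'I_n) : j %/ m < t.
Proof. by rewrite ltn_divLR // -nE. Qed.

Lemma card_sum_block_card (X : {set 'I_n}) :
  #|X| = \sum_(b < t) block_card X b.
Proof.
rewrite -sum1_card (partition_big (fun j : 'I_n => Ordinal (block_lt j)) xpredT) //=.
apply: eq_bigr => b _; rewrite /block_card -sum1_card; apply: eq_bigl => j.
by rewrite inE; congr (_ && _); apply/eqP/eqP => [<-|/val_inj].
Qed.

Lemma block_card_setT b : b < t -> block_card [set: 'I_n] b = m.
Proof.
move=> bt; have lt_bm (u : 'I_m) : b * m + u < n.
  by rewrite nE; have := ltn_ord u; nia.
rewrite /block_card -[RHS]card_ord -(card_imset _ (f := fun u => Ordinal (lt_bm u))).
  apply: eq_card => j; rewrite !inE; apply/eqP/imsetP => [jb|[u _ ->]] /=.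
    exists (Ordinal (ltn_pmod j m_gt0)) => //.
    by apply: val_inj; rewrite /= -jb -divn_eq.
  by rewrite divnMDl // divn_small // addn0.
by move=> u v [/addnI/val_inj].
Qed.

Lemma card_block (j0 : 'I_n) : #|[set j : 'I_n | j %/ m == j0 %/ m]| = m.
Proof.
by rewrite -[RHS](block_card_setT (block_lt j0)); apply: eq_card => j; rewrite !inE.
Qed.

Lemma block_card_leq (X : {set 'I_n}) b : b < t -> block_card X b <= m.
Proof.
move=> bt; rewrite -(block_card_setT bt) subset_leq_card //.
by apply/subsetP => j; rewrite !inE => /andP[_ ->].
Qed.

Lemma block_cardE (X : {set 'I_n}) b :
  block_card X b = \sum_(j in X) (j %/ m == b).
Proof.
rewrite /block_card -sum1_card (eq_bigl (fun j => (j \in X) && (j %/ m == b))).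
  by rewrite big_mkcondr /=; apply: eq_bigr => j _; case: (_ == _).
by move=> j; rewrite inE.
Qed.

Lemma block_cardU1 (X : {set 'I_n}) j b :
  j \notin X -> block_card (j |: X) b = (j %/ m == b) + block_card X b.
Proof. by move=> jX; rewrite !block_cardE big_setU1. Qed.

Lemma exists_block_bounded_subset r k s (Z : {set 'I_n}) :
  k <= s.+1 * r -> k + s * (m - r) <= #|Z| ->
  exists T : {set 'I_n},
    [/\ T \subset Z, #|T| = k & forall b : 'I_t, block_card T b <= r].
Proof.
move=> k_le Z_ge.
pose ok (T : {set 'I_n}) :=
  [&& T \subset Z, #|T| <= k & [forall b : 'I_t, block_card T b <= r]].
have ok0 : ok set0.
  by rewrite /ok sub0set cards0; apply/forallP => b; rewrite block_cardE big_set0.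
have [T /and3P[TZ Tk /forallP Tr] T_max] :=
  arg_maxnP (fun T : {set 'I_n} => #|T|) ok0.
(* If the largest admissible T were too small, every block meeting Z :\: T
   would already hold r points of T; at most s blocks can be full, and each
   hides at most m - r further points of Z. *)
exists T; split => //; apply/eqP; rewrite eqn_leq Tk leqNgt; apply/negP => Tk_lt.
have full j : j \in Z -> j \notin T -> r <= block_card T (j %/ m).
  move=> jZ jT; rewrite leqNgt; apply/negP => jr.
  suff /T_max : ok (j |: T) by rewrite cardsU1 jT; lia.
  apply/and3P; split; first by rewrite subUset sub1set jZ.
    by rewrite cardsU1 jT.
  apply/forallP => b; rewrite block_cardU1 //.
  by case: eqP => [<-|_]; rewrite ?add1n ?Tr.
pose u := \sum_(b < t) (r <= block_card T b).
have Z_le : #|Z| <= #|T| + u * (m - r).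
  rewrite !card_sum_block_card big_distrl -big_split /=; apply: leq_sum => b _.
  case: (leqP r (block_card T b)) => [r_le|Tb_lt] /=.
    by have := block_card_leq Z (ltn_ord b); rewrite mul1n; lia.
  rewrite mul0n addn0 subset_leq_card //; apply/subsetP => j.
  rewrite !inE => /andP[jZ /eqP jb]; rewrite jb eqxx andbT.
  by apply/negPn/negP => jT; have := full j jZ jT; rewrite jb; lia.
have u_le : u * r <= #|T|.
  rewrite card_sum_block_card big_distrl; apply: leq_sum => b _ /=.
  by case: (leqP r (block_card T b)); rewrite ?mul1n.
have r_gt0 : 0 < r by move: k_le Tk_lt; case: (r) => //; rewrite muln0; lia.
have u_le_s : u <= s by rewrite -ltnS -(ltn_pmul2r r_gt0); lia.
by have := leq_mul u_le_s (leqnn (m - r)); lia.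
Qed.

End Blocks.

Section BlockVandermonde.
Variables (F : fieldType) (n m t r : nat) (alpha : 'I_n -> F).
Hypotheses (alpha_inj : injective alpha) (m_gt0 : 0 < m) (nE : n = t * m).
Local Open Scope ring_scope.

Definition block_vdm : 'M[F]_(t * r, n) :=
  \matrix_(rho, j) if (rho %/ r == j %/ m)%N then alpha j ^+ (rho %% r)%N else 0.

Definition block_poly (y : 'rV[F]_(t * r)) (b : nat) : {poly F} :=
  \sum_(rho < t * r | (rho %/ r == b)%N) y 0 rho *: 'X^(rho %% r)%N.

Lemma block_vdm_mul (y : 'rV[F]_(t * r)) j :
  (y *m block_vdm) 0 j = (block_poly y (j %/ m)%N).[alpha j].
Proof.
rewrite !mxE horner_sum [RHS]big_mkcond /=; apply: eq_bigr => rho _.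
by rewrite mxE eq_sym; case: eqP; rewrite ?hornerZ ?hornerXn ?mulr0.
Qed.

Lemma size_block_poly (y : 'rV[F]_(t * r)) b : (size (block_poly y b) <= r)%N.
Proof.
apply: leq_trans (size_sum _ _ _) _; apply/bigmax_leqP => rho _.
apply: leq_trans (size_scale_leq _ _) _; rewrite size_polyXn ltn_pmod //.
by have := leq_ltn_trans (leq0n rho) (ltn_ord rho); rewrite muln_gt0 => /andP[].
Qed.

Lemma block_vdm_wt_on (y : 'rV[F]_(t * r)) j0 : (y *m block_vdm) 0 j0 != 0 ->
  (m + 1 - r <= wt_on [set j : 'I_n | (j %/ m == j0 %/ m)%N] (y *m block_vdm))%N.
Proof.
set c := y *m block_vdm; set S := [set j | _]; set p := block_poly y (j0 %/ m)%N.
have c_horner j : j \in S -> c 0 j = p.[alpha j].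
  by rewrite inE => /eqP jb; rewrite /c block_vdm_mul jb.
move=> c_j0; have p_neq0 : p != 0.
  by apply: contraNneq c_j0 => p0; rewrite c_horner ?inE // p0 horner0.
pose Z := [set j in S | c 0 j == 0].
have Z_lt : (#|Z| < r)%N.
  rewrite cardE -(size_map alpha); apply: leq_trans (size_block_poly y _).
  apply: max_poly_roots p_neq0 _ _; last by rewrite map_inj_uniq ?enum_uniq.
  apply/allP => x /mapP [j]; rewrite mem_enum inE => /andP[jS /eqP cj0] ->.
  by rewrite /root -c_horner // cj0.
have := cardsID [set j | c 0 j == 0] S; rewrite (card_block m_gt0 nE) /wt_on.
have -> : S :&: [set j | c 0 j == 0] = Z by apply/setP => j; rewrite !inE.
have -> : S :\: [set j | c 0 j == 0] = [set j in S | c 0 j != 0].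
  by apply/setP => j; rewrite !inE andbC.
by move: Z_lt; set z := #|Z|; set w := #|_|; lia.
Qed.

Lemma block_vdm_colsub_horner k (f : 'I_k -> 'I_n) (z : 'rV[F]_k)
    (p : {poly F}) b :
  z *m (colsub f block_vdm)^T = 0 -> (size p <= r)%N -> (b < t)%N ->
  \sum_(i < k | (f i %/ m == b)%N) z 0 i * p.[alpha (f i)] = 0.
Proof.
move=> z0 size_p bt; have lt_br (u : 'I_r) : (b * r + u < t * r)%N.
  by have := ltn_ord u; nia.
have row_eq0 (u : 'I_r) : \sum_(i < k)
    z 0 i * (if (f i %/ m == b)%N then alpha (f i) ^+ u else 0) = 0.
  have r_gt0 : (0 < r)%N by apply: leq_ltn_trans (ltn_ord u).
  have /matrixP/(_ 0 (Ordinal (lt_br u))) := z0; rewrite !mxE => z0u.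
  rewrite -[RHS]z0u.
  apply: eq_bigr => i _; rewrite !mxE /= divnMDl // modnMDl.
  by rewrite (divn_small (ltn_ord u)) (modn_small (ltn_ord u)) addn0 eq_sym.
transitivity (\sum_(u < r) p`_u * \sum_(i < k)
    z 0 i * (if (f i %/ m == b)%N then alpha (f i) ^+ u else 0)).
  rewrite big_mkcond /=; under [RHS]eq_bigr do rewrite mulr_sumr.
  rewrite exchange_big; apply: eq_bigr => i _ /=.
  case: ifP => _; last by rewrite mulr0 big1 // => u _; rewrite !mulr0.
  rewrite (horner_coef_wide _ size_p) mulr_sumr.
  by apply: eq_bigr => u _; rewrite mulrCA.
by rewrite big1 // => u _; rewrite row_eq0 mulr0.
Qed.

(* Pairing a column dependency [z] with the polynomial vanishing at the other
   selected points of the block of [f i0] isolates the coefficient [z 0 i0]. *)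
Lemma rank_block_vdm_colsub k (f : 'I_k -> 'I_n) : injective f ->
  (forall i0, #|[set i | f i %/ m == f i0 %/ m]| <= r)%N ->
  \rank (colsub f block_vdm) = k.
Proof.
move=> f_inj block_le; rewrite -mxrank_tr; apply/eqP/inj_row_free => z z0.
apply/rowP => i0; rewrite mxE; set b := (f i0 %/ m)%N.
pose others := [set i | (f i %/ m == b)%N] :\ i0.
pose L := \prod_(a <- [seq alpha (f i) | i <- enum others]) ('X - a%:P).
have root_L i : root L (alpha (f i)) = (i \in others).
  by rewrite root_prod_XsubC (mem_map (inj_comp alpha_inj f_inj)) mem_enum.
have size_L : (size L <= r)%N.
  rewrite size_prod_XsubC size_map -cardE.
  by have := block_le i0; rewrite (cardsD1 i0) inE eqxx.
have := block_vdm_colsub_horner z0 size_L (block_lt m_gt0 nE (f i0)).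
rewrite (bigD1 i0) //= big1 => [|i /andP[ib ii0]]; last first.
  by apply/eqP; rewrite mulf_eq0 -rootE root_L !inE ii0 ib orbT.
by rewrite addr0 => /eqP; rewrite mulf_eq0 -rootE root_L !inE eqxx orbF => /eqP.
Qed.

Lemma exists_block_vdm_colsub_rank k s (Z : {set 'I_n}) :
  (k <= s.+1 * r)%N -> (k + s * (m - r) <= #|Z|)%N ->
  exists2 f : 'I_k -> 'I_n, forall i, f i \in Z & \rank (colsub f block_vdm) = k.
Proof.
move=> k_le Z_ge.
have [T [TZ Tk T_le]] := exists_block_bounded_subset m_gt0 nE k_le Z_ge.
pose f (i : 'I_k) := enum_val (cast_ord (esym Tk) i).
have f_inj : injective f by move=> i i' /enum_val_inj/cast_ord_inj.
exists f => [i|]; first exact: subsetP TZ _ (enum_valP _).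
apply: (rank_block_vdm_colsub f_inj) => i0.
apply: leq_trans (T_le (Ordinal (block_lt m_gt0 nE (f i0)))).
rewrite -(card_imset _ f_inj) subset_leq_card //.
apply/subsetP => j /imsetP[i]; rewrite !inE => /eqP bi ->.
by rewrite bi eqxx andbT enum_valP.
Qed.

End BlockVandermonde.

Section BlockCode.
Variables (F : fieldType) (n m t r k : nat) (alpha : 'I_n -> F).
Variable A : 'M[F]_(k, t * r).
Hypotheses (alpha_inj : injective alpha) (m_gt0 : 0 < m) (nE : n = t * m).
Local Open Scope ring_scope.
Local Notation B := (block_vdm m t r alpha).
Local Notation G := (A *m B).
Hypothesis A_generic :
  forall f : 'I_k -> 'I_n, \rank (colsub f B) = k -> \rank (colsub f G) = k.

Lemma block_code_locality : all_symbol_locality G r (m + 1 - r).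
Proof.
move=> i; exists [set j : 'I_n | (j %/ m == i %/ m)%N]; split.
- by rewrite inE.
- by rewrite (card_block m_gt0 nE); lia.
move=> _ /submxP[x ->] [j]; rewrite inE mulmxA => /eqP ji cj.
by have := block_vdm_wt_on alpha_inj m_gt0 nE cj; rewrite ji.
Qed.

Lemma block_code_wt_ge s x :
  (k <= s.+1 * r)%N -> x *m G != 0 -> (n + 1 - k - s * (m - r) <= wt (x *m G))%N.
Proof.
move=> k_le xG0; rewrite leqNgt; apply/negP => wt_lt.
pose Z := [set j | (x *m G) 0 j == 0].
have Z_ge : (k + s * (m - r) <= #|Z|)%N.
  have := cardsC Z; rewrite card_ord (_ : #|~: Z| = wt (x *m G)).
    by nia.
  by apply: eq_card => j; rewrite !inE.
have [f fZ rank_f] := exists_block_vdm_colsub_rank alpha_inj m_gt0 nE k_le Z_ge.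
have free_f : row_free (colsub f G) by rewrite /row_free A_generic.
move/negP: xG0; apply; apply/eqP.
suff -> : x = 0 by rewrite mul0mx.
apply: (row_free_inj free_f); rewrite mul0mx mulmx_colsub; apply/rowP => i.
by rewrite [LHS]mxE [RHS]mxE; apply/eqP; have := fZ i; rewrite inE.
Qed.

(* [x] solves k - 1 homogeneous equations: the s r coordinates of [x *m A]
   feeding the first s blocks, and k - 1 - s r coordinates of [x *m G] in
   block s. *)
Lemma block_code_vanishing s :
  (r <= m)%N -> (s * r < k)%N -> (k <= s.+1 * r)%N -> (k + s * (m - r) <= n)%N ->
  exists2 x : 'rV[F]_k, x != 0 &
    forall j : 'I_n, (j < s * m + (k.-1 - s * r))%N -> (x *m G) 0 j = 0.
Proof.
move=> le_rm lt_srk k_le le_kn.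
have r_gt0 : (0 < r)%N by move: k_le; rewrite mulSn; lia.
have sm_eq : (s * m = s * r + s * (m - r))%N by rewrite -mulnDr subnKC.
have le_st : (s <= t)%N by rewrite -(leq_pmul2r m_gt0) -nE sm_eq; nia.
have lt_A (rho : 'I_(s * r)) : (rho < t * r)%N.
  exact: leq_trans (ltn_ord rho) (leq_mul le_st (leqnn r)).
have lt_ext (l : 'I_(k.-1 - s * r)) : (s * m + l < n)%N.
  by have := ltn_ord l; rewrite sm_eq; nia.
pose C := row_mx (colsub (fun rho => Ordinal (lt_A rho)) A)
                 (colsub (fun l => Ordinal (lt_ext l)) G).
have /rowV0Pn[x /sub_kermxP xC0 x_neq0] : kermx C != 0.
  rewrite -mxrank_eq0 mxrank_ker subn_eq0 -ltnNge.
  by apply: leq_ltn_trans (rank_leq_col C) _; lia.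
exists x => // j lt_jN.
move: xC0; rewrite mul_mx_row !mulmx_colsub => /eqP.
rewrite row_mx_eq0 => /andP[/eqP/rowP xA0 /eqP/rowP xG0].
case: (ltnP j (s * m)) => [lt_jsm|le_smj].
  rewrite mulmxA block_vdm_mul /block_poly big1 ?horner0 // => rho /eqP rho_j.
  have lt_rho : (rho < s * r)%N by rewrite -ltn_divLR // rho_j ltn_divLR.
  have -> : rho = Ordinal (lt_A (Ordinal lt_rho)) by apply: val_inj.
  by have := xA0 (Ordinal lt_rho); rewrite [LHS]mxE [RHS]mxE => ->; rewrite scale0r.
have lt_l : (j - s * m < k.-1 - s * r)%N by lia.
have -> : j = Ordinal (lt_ext (Ordinal lt_l)) by apply: val_inj; rewrite /= subnKC.
by have := xG0 (Ordinal lt_l); rewrite [LHS]mxE [RHS]mxE.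
Qed.

Lemma block_code_row_free s :
  (k <= s.+1 * r)%N -> (k + s * (m - r) <= n)%N -> row_free G.
Proof.
move=> k_le le_kn; have Z_ge : (k + s * (m - r) <= #|[set: 'I_n]|)%N.
  by rewrite cardsT card_ord.
have [f _] := exists_block_vdm_colsub_rank alpha_inj m_gt0 nE k_le Z_ge.
by move/A_generic/eqP/row_free_colsub.
Qed.

Lemma block_code_min_dist s : (r <= m)%N -> (s * r < k)%N -> (k <= s.+1 * r)%N ->
  (k + s * (m - r) <= n)%N -> min_dist_eq G (n + 1 - k - s * (m - r)).
Proof.
move=> le_rm lt_srk k_le le_kn; split; last first.
  by move=> _ /submxP[y ->]; apply: block_code_wt_ge.
have [x x_neq0 x_van] := block_code_vanishing le_rm lt_srk k_le le_kn.
have xG_neq0 : x *m G != 0.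
  apply: contra x_neq0 => /eqP xG0; apply/eqP.
  by apply: (row_free_inj (block_code_row_free k_le le_kn)); rewrite xG0 mul0mx.
exists (x *m G); split; first exact: submxMl.
split => //; apply/eqP; rewrite eqn_leq block_code_wt_ge // andbT.
have [le_Nn N_eq] : (s * m + (k.-1 - s * r) <= n)%N /\
    (n - (s * m + (k.-1 - s * r)) = n + 1 - k - s * (m - r))%N.
  rewrite (_ : s * m = s * r + s * (m - r))%N; last by rewrite -mulnDr subnKC.
  nia.
by rewrite -N_eq wt_leq_vanish.
Qed.

End BlockCode.

Theorem theorem5 (n k r delta : nat) (q : nat) (F : finFieldType) :
  (0 < n)%N -> (0 < k)%N -> (0 < r)%N -> (0 < delta)%N ->
  (r + delta - 1 %| n)%N ->
  (delta <= (n + 1 - k) - (ceil_div k r - 1) * (delta - 1))%N ->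
  #|F| = q -> (k * n ^ k < q)%N ->
  exists G : 'M[F]_(k, n),
    \rank G = k /\
    min_dist_eq G ((n + 1 - k) - (ceil_div k r - 1) * (delta - 1))%N /\
    all_symbol_locality G r delta.
Proof.
move=> n_gt0 k_gt0 r_gt0 delta_gt0 m_dvd_n d_ge <- lt_q.
set m := r + delta - 1 in m_dvd_n; set s := ceil_div k r - 1.
have nE : n = n %/ m * m by rewrite divnK.
have m_gt0 : 0 < m by rewrite /m; lia.
have le_rm : r <= m by rewrite /m; lia.
have m_r : delta - 1 = m - r by rewrite /m; lia.
have [lt_srk k_le] := andP (ceil_div_bounds k_gt0 r_gt0).
rewrite m_r -/s in d_ge *.
have le_kn : k + s * (m - r) <= n by nia.
have lt_nkF : n ^ k < #|F| by apply: leq_ltn_trans lt_q; rewrite leq_pmull.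
have le_nF : n <= #|F|.
  by apply/ltnW/(leq_ltn_trans _ lt_nkF); rewrite -{1}(expn1 n) leq_pexp2l.
have [alpha alpha_inj] := exists_inj_ord le_nF.
have [A A_generic] := exists_mulmx_colsub_rank (block_vdm m (n %/ m) r alpha) lt_nkF.
exists (A *m block_vdm m (n %/ m) r alpha)%R; split.
  exact/eqP/(block_code_row_free alpha_inj m_gt0 nE A_generic k_le le_kn).
split; first exact: block_code_min_dist.
by rewrite (_ : delta = m + 1 - r); [apply: block_code_locality | lia].
Qed.
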